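(* For every real $x$ and every natural number $n$, $\mathrm{LB}_{\mathrm{atan}}(x,n) \le \arctan(x) \le \mathrm{UB}_{\mathrm{atan}}(x,n)$.
   Context: For $0 < x \le 1$ and natural $n$: \[\mathrm{LB}_{\mathrm{atan}}(x,n) = \sum_{i=0}^{2n+1} (-1)^i\frac{x^{2i+1}}{2i+1}, \qquad \mathrm{UB}_{\mathrm{atan}}(x,n) = \sum_{i=0}^{2n} (-1)^i\frac{x^{2i+1}}{2i+1}.\] Bounds on $\pi$: $\mathrm{LB}_{\pi}(n) = 16\,\mathrm{LB}_{\mathrm{atan}}(1/5,n) - 4\,\mathrm{UB}_{\mathrm{atan}}(1/239,n)$ and $\mathrm{UB}_{\pi}(n) = 16\,\mathrm{UB}_{\mathrm{atan}}(1/5,n) - 4\,\mathrm{LB}_{\mathrm{atan}}(1/239,n)$. Extension to all reals: $\mathrm{LB}_{\mathrm{atan}}(0,n)=\mathrm{UB}_{\mathrm{atan}}(0,n)=0$; for $x>1$: $\mathrm{LB}_{\mathrm{atan}}(x,n) = \frac{\mathrm{LB}_{\pi}(n)}{2} - \mathrm{UB}_{\mathrm{atan}}(1/x,n)$ and $\mathrm{UB}_{\mathrm{atan}}(x,n) = \frac{\mathrm{UB}_{\pi}(n)}{2} - \mathrm{LB}_{\mathrm{atan}}(1/x,n)$; for $x<0$: $\mathrm{LB}_{\mathrm{atan}}(x,n) = -\mathrm{UB}_{\mathrm{atan}}(-x,n)$ and $\mathrm{UB}_{\mathrm{atan}}(x,n) = -\mathrm{LB}_{\mathrm{atan}}(-x,n)$.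 *)

From Stdlib Require Import Reals.
Open Scope R_scope.

Definition atan_term (x : R) (i : nat) : R :=
  (-1) ^ i * x ^ (2 * i + 1) / INR (2 * i + 1).

(* Base bounds for 0 < x <= 1: sum_f_R0 f k = f 0 + ... + f k. *)
Definition LB_atan0 (x : R) (n : nat) : R := sum_f_R0 (atan_term x) (2 * n + 1).
Definition UB_atan0 (x : R) (n : nat) : R := sum_f_R0 (atan_term x) (2 * n).

Definition LB_pi (n : nat) : R := 16 * LB_atan0 (1/5) n - 4 * UB_atan0 (1/239) n.
Definition UB_pi (n : nat) : R := 16 * UB_atan0 (1/5) n - 4 * LB_atan0 (1/239) n.

Definition LB_atan_pos (x : R) (n : nat) : R :=
  if Rle_dec x 1 then LB_atan0 x n else LB_pi n / 2 - UB_atan0 (/ x) n.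
Definition UB_atan_pos (x : R) (n : nat) : R :=
  if Rle_dec x 1 then UB_atan0 x n else UB_pi n / 2 - LB_atan0 (/ x) n.

Definition LB_atan (x : R) (n : nat) : R :=
  if Rlt_dec 0 x then LB_atan_pos x n
  else if Req_EM_T x 0 then 0
  else - UB_atan_pos (- x) n.
Definition UB_atan (x : R) (n : nat) : R :=
  if Rlt_dec 0 x then UB_atan_pos x n
  else if Req_EM_T x 0 then 0
  else - LB_atan_pos (- x) n.

(* On (0, 1] the arctangent series is alternating with decreasing terms, so its
   partial sums ending in an odd (resp. even) index bound atan from below (resp.
   above). Machin's formula pi/4 = 4 atan(1/5) - atan(1/239) turns these into
   bounds on pi; for x > 1 one uses atan x = pi/2 - atan(1/x), and atan is odd. *)

From Stdlib Require Import Reals Lra Lia Machin.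
Open Scope R_scope.

Lemma sum_atan_term_tg_alt (x : R) (k : nat) :
  sum_f_R0 (atan_term x) k = sum_f_R0 (tg_alt (Ratan_seq x)) k.
Proof. apply sum_eq; intros i _; unfold atan_term, tg_alt, Ratan_seq, Rdiv; ring. Qed.

Lemma atan_bounds_unit (x : R) (n : nat) :
  0 < x <= 1 -> LB_atan0 x n <= atan x <= UB_atan0 x n.
Proof.
  intros Hx; unfold LB_atan0, UB_atan0; rewrite !sum_atan_term_tg_alt.
  replace (2 * n + 1)%nat with (S (2 * n)) by lia.
  destruct (Req_dec x 1) as [-> | Hx1].
  - (* [atan_eq_ps_atan] only covers (0, 1); at x = 1 this is Leibniz's series. *)
    rewrite atan_1.
    assert (Leibniz : forall k,
      sum_f_R0 (tg_alt (Ratan_seq 1)) k = sum_f_R0 (tg_alt PI_tg) k).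
    { intros k; apply sum_eq; intros i _; unfold tg_alt; now rewrite Alt_PI_tg. }
    rewrite !Leibniz; apply PI_ineq.
  - rewrite atan_eq_ps_atan by lra; unfold ps_atan.
    destruct (in_int x) as [Hint | Hint]; [| exfalso; apply Hint; lra].
    destruct (ps_atan_exists_1 x Hint) as [v Hv].
    assert (Hx' : 0 <= x <= 1) by lra.
    exact (alternated_series_ineq _ _ _
             (Ratan_seq_decreasing _ Hx') (Ratan_seq_converging _ Hx') Hv).
Qed.

Lemma PI_bounds (n : nat) : LB_pi n <= PI <= UB_pi n.
Proof.
  pose proof (atan_bounds_unit (1/5) n ltac:(lra)).
  pose proof (atan_bounds_unit (1/239) n ltac:(lra)).
  pose proof Machin_4_5_239.
  replace (/ 5) with (1/5) in * by field.
  replace (/ 239) with (1/239) in * by field.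
  unfold LB_pi, UB_pi; lra.
Qed.

Lemma atan_bounds_pos (x : R) (n : nat) :
  0 < x -> LB_atan_pos x n <= atan x <= UB_atan_pos x n.
Proof.
  intros Hx; unfold LB_atan_pos, UB_atan_pos.
  destruct (Rle_dec x 1) as [Hx1 | Hx1]; [apply atan_bounds_unit; lra |].
  assert (Hinv : 0 < / x < 1).
  { split; [apply Rinv_0_lt_compat; lra |].
    rewrite <- Rinv_1; apply Rinv_lt_contravar; lra. }
  pose proof (atan_bounds_unit (/ x) n ltac:(lra)).
  pose proof (PI_bounds n).
  assert (atan x = PI / 2 - atan (/ x)) by (rewrite atan_inv by lra; ring).
  lra.
Qed.

Theorem proposition5 (x : R) (n : nat) :
  LB_atan x n <= atan x <= UB_atan x n.
Proof.
  unfold LB_atan, UB_atan.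
  destruct (Rlt_dec 0 x) as [Hx | Hx]; [now apply atan_bounds_pos |].
  destruct (Req_EM_T x 0) as [-> | Hx0]; [rewrite atan_0; lra |].
  pose proof (atan_bounds_pos (- x) n ltac:(lra)) as Hneg.
  rewrite atan_opp in Hneg; lra.
Qed.
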